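(* Let $G$ be a finite group. Suppose there exist integers $1\le j<k$ such that $Z_{K_i}>Z_{K_{i-1}}$ and $[K_i,G]\le K_{i-1}$ for all integers $i$ with $j\le i\le k$. Then there is a prime $p$ such that $K_k/K_{j-1}$ and $Z_{K_k}/Z_{K_{j-1}}$ are $p$-groups. In particular, $K_i/K_{i-1}$ and $Z_{K_i}/Z_{K_{i-1}}$ are elementary abelian $p$-groups for every integer $i$ with $j\le i\le k$.
   Context: All groups are finite. For $\chi\in\mathrm{Irr}(G)$, the center of $\chi$ is $Z(\chi)=\{g\in G : |\chi(g)|=\chi(1)\}$. For a nonabelian group $H$, let $\mathcal{X}_H=\{\chi\in\mathrm{Irr}(H) : Z(\chi)>Z(H)\}$ (strict containment) and define $K(H)=\bigcap_{\chi\in\mathcal{X}_H}\ker(\chi)$; if $H$ is abelian, set $K(H)=H$. Define normal subgroups $K_i$ of $G$ by $K_0=1$ and $K_{i+1}/K_{i}=K(G/K_{i})$ for $i\ge 0$. For a normal subgroup $N$ of $G$, $Z_N$ is defined by $Z_N/N=Z(G/N)$. *)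

From mathcomp Require Import all_boot all_order all_algebra all_fingroup all_solvable all_field all_character.
Set Implicit Arguments. Unset Strict Implicit. Unset Printing Implicit Defensive.
Import GRing.Theory Num.Theory.
Local Open Scope group_scope.
Local Open Scope ring_scope.

Definition Kfun (rT : finGroupType) (H : {group rT}) : {group rT} :=
  if abelian H then H
  else (\bigcap_(i : Iirr H | 'Z(H) \proper ('Z('chi[H]_i%R))%CF) cfker 'chi[H]_i%R)%G.

(* K_0 = 1, K_{i+1}/K_i = K(G/K_i). *)
Fixpoint Kser (gT : finGroupType) (G : {group gT}) (i : nat) : {group gT} :=
  match i with
  | 0 => 1%G
  | i'.+1 => (coset (Kser G i') @*^-1 Kfun (G / Kser G i')%G)%G
  end.

(* Z_N / N = Z(G/N). *)
Definition ZN (gT : finGroupType) (G N : {group gT}) : {group gT} :=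
  (coset N @*^-1 'Z(G / N))%G.

From mathcomp Require Import all_boot all_order all_algebra all_fingroup all_solvable all_field all_character.

(* Write Z_N for the preimage of Z(G/N).  The only consequence of the
   definition of K that matters is: if L is normal in G, K_i <= L and
   K_(i+1) is not contained in L, then some irreducible chi with L <= ker chi
   is outside X_(G/K_i), whence Z_L <= Z(chi) <= Z_(K_i).
   On a layer N = K_(i-1) < M = K_i with [M, G] <= N, the group M/N is central
   in G/N, so L = {x in M | x^p in N} is a normal subgroup.  Take y in
   Z_M \ Z_N and a prime p with y^t outside Z_N but y^(tp) in Z_N; as
   [y^t, g]^p = [y^(tp), g] mod N, the element y^t lies in Z_L \ Z_N, which
   forces M <= L.  Hence M/N and Z_M/Z_N have exponent p.  The same trick with
   L = {x in K_(i+1) | x^r in K_(i-1)} shows that adjacent layers cannot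
   carry different primes q and r, since x^q and x^r together generate <x>. *)

Set Implicit Arguments.
Unset Strict Implicit.
Unset Printing Implicit Defensive.

Local Open Scope group_scope.

Lemma mem_coprime_expg (gT : finGroupType) (X : {group gT}) (x : gT) (q r : nat) :
  (0 < q)%N -> coprime q r -> x ^+ q \in X -> x ^+ r \in X -> x \in X.
Proof.
move=> q_gt0 co_qr Xxq Xxr; have [a _] := Bezoutl r q_gt0.
rewrite (eqP co_qr) => /dvdnP[b def_ar].
have Xxar : x ^+ (a * r) \in X by rewrite mulnC expgM groupX.
by rewrite -(groupMr _ Xxar) -expgS -add1n def_ar mulnC expgM groupX.
Qed.

Lemma exists_prime_expg_in (gT : finGroupType) (H : {group gT}) (x : gT) : x \notin H ->
  exists p t, [/\ prime p, x ^+ t \notin H & (x ^+ t) ^+ p \in H].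
Proof.
move=> Hx'; have ex_n : exists n, (0 < n)%N && (x ^+ n \in H).
  by exists #[x]; rewrite order_gt0 expg_order group1.
case: (ex_minnP ex_n) => n /andP[n_gt0 Hxn] min_n.
have n_gt1 : (1 < n)%N.
  by rewrite ltn_neqAle n_gt0 andbT; apply: contraNneq Hx' => n1; rewrite -n1 expg1 in Hxn.
have t_gt0 : (0 < n %/ pdiv n)%N by rewrite divn_gt0 ?pdiv_gt0 ?pdiv_leq.
exists (pdiv n), (n %/ pdiv n); split; first exact: pdiv_prime.
  apply: contraL (ltn_Pdiv (prime_gt1 (pdiv_prime n_gt1)) n_gt0) => Hxt.
  by rewrite -leqNgt min_n ?t_gt0.
by rewrite -expgM divnK ?pdiv_dvd.
Qed.

Lemma expg_chain (gT : finGroupType) (A : nat -> {set gT}) (p a b : nat) :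
  (a <= b)%N -> (forall i, (a <= i < b)%N -> {in A i.+1, forall x, x ^+ p \in A i}) ->
  {in A b, forall x, x ^+ (p ^ (b - a)) \in A a}.
Proof.
elim: b => [|b IHb] le_ab expA x Ax.
  by move: le_ab Ax; rewrite leqn0 => /eqP-> Ax; rewrite expg1.
move: le_ab; rewrite leq_eqVlt ltnS => /predU1P[eq_ab | le_ab].
  by rewrite eq_ab subnn expg1.
have Axp : x ^+ p \in A b by apply: expA; rewrite ?le_ab /=.
rewrite subSn // expnS expgM; apply: IHb Axp => // i /andP[le_ai lt_ib].
by apply: expA; rewrite le_ai ltnW.
Qed.

Lemma pgroup_quotient_expg (gT : finGroupType) (A B : {group gT}) (p e : nat) :
  prime p -> {in A, forall x, x ^+ (p ^ e) \in B} -> p.-group (A / B).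
Proof.
move=> p_pr expA; rewrite -pnat_exponent (@pnat_dvd _ (p ^ e)) ?pnatX ?pnat_id //.
apply/exponentP=> _ /morphimP[x Nx Ax ->].
by rewrite -morphX // mker ?ker_coset ?expA.
Qed.

Lemma abelem_quotient_expg (gT : finGroupType) (A B : {group gT}) (p : nat) :
  prime p -> A^`(1) \subset B -> {in A, forall x, x ^+ p \in B} -> p.-abelem (A / B).
Proof.
move=> p_pr sA'B expA; apply/(abelemP p_pr); split; first exact: sub_der1_abelian.
by move=> _ /morphimP[x Nx Ax ->]; rewrite -morphX // mker ?ker_coset ?expA.
Qed.

Section CentralPreimage.

Variables (gT : finGroupType) (G N : {group gT}).
Hypothesis nsNG : N <| G.

Let nNG : G \subset 'N(N) := normal_norm nsNG.

Lemma ZN_normal : ZN G N <| G.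
Proof. by rewrite /ZN /= -{2}(quotientGK nsNG) cosetpre_normal center_normal. Qed.

Lemma ZN_sub : ZN G N \subset G.
Proof. exact: normal_sub ZN_normal. Qed.

Lemma coset_ZN x : x \in ZN G N -> coset N x \in 'Z(G / N).
Proof. by case/morphpreP. Qed.

Lemma commute_coset_ZN x y : x \in ZN G N -> y \in G -> commute (coset N x) (coset N y).
Proof. by move=> Zx Gy; apply/commute_sym/(centerC (mem_quotient N Gy))/coset_ZN. Qed.

Lemma ZNP x : reflect (x \in G /\ {in G, forall g, [~ x, g] \in N}) (x \in ZN G N).
Proof.
apply: (iffP idP) => [Zx | [Gx cxG]].
  have Gx := subsetP ZN_sub x Zx; split=> // g Gg.
  have [Nx Ng] := (subsetP nNG x Gx, subsetP nNG g Gg).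
  apply: coset_idr; first by rewrite groupR.
  by rewrite morphR //; apply/eqP/commgP/commute_coset_ZN.
have Nx := subsetP nNG x Gx; apply/morphpreP; split=> //.
apply/centerP; split=> [|_ /morphimP[g Ng Gg ->]]; first exact: mem_quotient.
by apply/commgP/eqP; rewrite -morphR //; apply: coset_id; apply: cxG.
Qed.

Lemma commg_ZN x g : x \in ZN G N -> g \in G -> [~ x, g] \in N.
Proof. by case/ZNP=> _; apply. Qed.

Lemma commZN : [~: ZN G N, G] \subset N.
Proof.
by rewrite gen_subG; apply/subsetP=> _ /imset2P[x g Zx Gg ->]; apply: commg_ZN.
Qed.

Lemma sub_ZN (M : {set gT}) : M \subset G -> [~: M, G] \subset N -> M \subset ZN G N.
Proof.
move=> sMG sMG_N; apply/subsetP=> x Mx; apply/ZNP; split; first exact: subsetP Mx.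
by move=> g Gg; apply: subsetP sMG_N _ (mem_commg Mx Gg).
Qed.

Lemma coset_commXg x g n : x \in G -> g \in G -> [~ x, g] \in ZN G N ->
  coset N [~ x ^+ n, g] = coset N ([~ x, g] ^+ n).
Proof.
move=> Gx Gg Zxg; have [Nx Ng] := (subsetP nNG x Gx, subsetP nNG g Gg).
rewrite morphR ?groupX // morphX // commXg; last first.
  by rewrite -morphR //; apply/commute_sym/commute_coset_ZN.
by rewrite morphX ?groupR // morphR.
Qed.

Lemma expg_ZNP y n : y \in G -> {in G, forall g, [~ y, g] \in ZN G N} ->
  reflect {in G, forall g, [~ y, g] ^+ n \in N} (y ^+ n \in ZN G N).
Proof.
move=> Gy cyZ; have memN z : z \in G -> (coset N z == 1) = (z \in N).
  by move=> Gz; apply/eqP/idP=> [|/coset_id//]; apply: coset_idr (subsetP nNG z Gz).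
suff eq_comm g : g \in G -> ([~ y ^+ n, g] \in N) = ([~ y, g] ^+ n \in N).
  apply: (iffP (ZNP _)) => [[_ cyG] g Gg | cyG]; first by rewrite -eq_comm ?cyG.
  by split=> [|g Gg]; rewrite ?groupX ?eq_comm ?cyG.
move=> Gg; have Gyng : [~ y ^+ n, g] \in G by rewrite groupR ?groupX.
by rewrite -memN // -memN ?groupX ?groupR // coset_commXg ?cyZ.
Qed.

End CentralPreimage.

Lemma ZNS (gT : finGroupType) (G L1 L2 : {group gT}) :
  L1 <| G -> L2 <| G -> L1 \subset L2 -> ZN G L1 \subset ZN G L2.
Proof.
move=> nsL1G nsL2G sL12; apply/subsetP=> x /(ZNP nsL1G)[Gx cxG].
by apply/(ZNP nsL2G); split=> // g Gg; apply: subsetP sL12 _ (cxG g Gg).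
Qed.

Section PowerRoots.

Variables (gT : finGroupType) (G N X : {group gT}) (p : nat).
Hypotheses (nsNG : N <| G) (sNX : N \subset X) (sXZ : X \subset ZN G N).

Let nNG : G \subset 'N(N) := normal_norm nsNG.
Let sXG : X \subset G := subset_trans sXZ (ZN_sub nsNG).

(* The closure <<_>> only makes this a group unconditionally: see mem_proot. *)
Definition proot := <<[set x in X | x ^+ p \in N]>>%G.

Lemma mem_proot z : (z \in proot) = (z \in X) && (z ^+ p \in N).
Proof.
rewrite /proot /= gen_set_id ?inE //; apply/group_setP; split.
  by rewrite inE group1 expg1n group1.
move=> x y /setIdP[Xx Nxp] /setIdP[Xy Nyp]; rewrite inE groupM //=.
have [Gx Gy] := (subsetP sXG x Xx, subsetP sXG y Xy).
have [Nx Ny] := (subsetP nNG x Gx, subsetP nNG y Gy).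
have cxy := commute_coset_ZN (subsetP sXZ x Xx) Gy.
apply: coset_idr; first by rewrite groupX ?groupM.
by rewrite morphX ?groupM // morphM // expgMn // -!morphX // !mker ?ker_coset ?mulg1.
Qed.

Lemma sub_proot : N \subset proot.
Proof. by apply/subsetP=> x Nx; rewrite mem_proot (subsetP sNX) ?groupX. Qed.

Lemma proot_sub : proot \subset X.
Proof. by apply/subsetP=> x; rewrite mem_proot => /andP[]. Qed.

Lemma proot_normal : proot <| G.
Proof.
rewrite /normal (subset_trans proot_sub sXG) /=.
rewrite -commg_subl gen_subG; apply/subsetP=> _ /imset2P[x g Rx Gg ->].
exact: subsetP sub_proot _ (commg_ZN nsNG (subsetP sXZ x (subsetP proot_sub x Rx)) Gg).
Qed.

Lemma ZN_proot y : y \in G -> {in G, forall g, [~ y, g] \in X} ->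
  y ^+ p \in ZN G N -> y \in ZN G proot.
Proof.
move=> Gy cyX; have cyZ g : g \in G -> [~ y, g] \in ZN G N.
  by move/cyX; apply: subsetP.
move/(expg_ZNP nsNG p Gy cyZ)=> cyN; apply/(ZNP proot_normal); split=> // g Gg.
by rewrite mem_proot cyX ?cyN.
Qed.

End PowerRoots.

Definition ZN_collapses (gT : finGroupType) (G N M : {group gT}) :=
  forall L : {group gT}, L <| G -> N \subset L -> ~~ (M \subset L) ->
    ZN G L \subset ZN G N.

Definition layer_exp (gT : finGroupType) (G N M : {group gT}) (p : nat) :=
  {in M, forall x, x ^+ p \in N} /\ {in ZN G M, forall y, y ^+ p \in ZN G N}.

Section Layer.

Variables (gT : finGroupType) (G N M : {group gT}).
Hypotheses (nsNG : N <| G) (nsMG : M <| G) (sNM : N \subset M) (cMG : [~: M, G] \subset N).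

Let sMZ : M \subset ZN G N := sub_ZN nsNG (normal_sub nsMG) cMG.

Lemma exists_layer_exp : ZN_collapses G N M -> ZN G N \proper ZN G M ->
  exists2 p, prime p & layer_exp G N M p.
Proof.
move=> collapse /properP[_ [y Z1y Z0y']].
have [p [t [p_pr Z0yt' Z0ytp]]] := exists_prime_expg_in Z0y'.
have Gy := subsetP (ZN_sub nsMG) y Z1y.
have sML : M \subset proot N M p.
  apply: contraR Z0yt' => not_sML; have nsLG := proot_normal p nsNG sNM sMZ.
  apply: subsetP (collapse _ nsLG (sub_proot p nsNG sNM sMZ) not_sML) _ _.
  apply: ZN_proot Z0ytp => // [|g Gg]; first exact: groupX.
  exact: (commg_ZN nsMG (groupX t Z1y) Gg).
have expM : {in M, forall x, x ^+ p \in N}.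
  by move=> x /(subsetP sML); rewrite (mem_proot p nsNG sMZ) => /andP[].
exists p => //; split=> // z Z1z; have Gz := subsetP (ZN_sub nsMG) z Z1z.
have cZ g : g \in G -> [~ z, g] \in M := commg_ZN nsMG Z1z.
apply/(expg_ZNP nsNG p Gz) => g Gg; first exact: subsetP sMZ _ (cZ g Gg).
exact: expM (cZ g Gg).
Qed.

Lemma layer_abelem p : prime p -> layer_exp G N M p ->
  p.-abelem (M / N) /\ p.-abelem (ZN G M / ZN G N).
Proof.
move=> p_pr [expM expZM]; split; apply: abelem_quotient_expg => //; rewrite derg1.
  exact: subset_trans (commgS M (normal_sub nsMG)) cMG.
apply: subset_trans (commgS _ (ZN_sub nsMG)) _.
exact: subset_trans (commZN nsMG) sMZ.
Qed.

End Layer.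

Lemma layer_exp_uniq (gT : finGroupType) (G N M M' : {group gT}) (q r : nat) :
  N <| G -> M <| G -> M' <| G -> N \subset M -> M \subset M' ->
  [~: M, G] \subset N -> [~: M', G] \subset M -> ZN_collapses G N M ->
  ZN G N \proper ZN G M -> ZN G M \proper ZN G M' ->
  prime q -> layer_exp G N M q -> prime r -> layer_exp G M M' r -> q = r.
Proof.
move=> nsNG nsMG nsM'G sNM sMM' cMG cM'G collapse ltZ01 ltZ12.
move=> q_pr [expM expZM] r_pr [expM' expZM'].
apply/eqP; apply: contraT => neq_qr.
have co_qr : coprime q r by rewrite prime_coprime // dvdn_prime2.
have q_gt0 := prime_gt0 q_pr.
have sMZ0 := sub_ZN nsNG (normal_sub nsMG) cMG.
have sM'Z1 := sub_ZN nsMG (normal_sub nsM'G) cM'G.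
have sM'Z0 : M' \subset ZN G N.
  apply/subsetP=> x M'x; apply: (mem_coprime_expg q_gt0 co_qr).
    exact: expZM (subsetP sM'Z1 x M'x).
  exact: subsetP sMZ0 _ (expM' x M'x).
have sNM' := subset_trans sNM sMM'.
have not_sML : ~~ (M \subset proot N M' r).
  have /subsetPn[m Mm Nm'] : ~~ (M \subset N).
    by apply: contraL ltZ01 => sMN; rewrite properE (ZNS nsMG nsNG sMN) andbF.
  apply: contra Nm' => /subsetP/(_ m Mm); rewrite (mem_proot r nsNG sM'Z0).
  by case/andP=> _; apply: mem_coprime_expg q_gt0 co_qr (expM m Mm).
have [_ [w Z2w Z1w']] := properP ltZ12.
have Gw := subsetP (ZN_sub nsM'G) w Z2w.
have Z0wq : w ^+ q \in ZN G N.
  have LnG := proot_normal r nsNG sNM' sM'Z0.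
  apply: subsetP (collapse _ LnG (sub_proot r nsNG sNM' sM'Z0) not_sML) _ _.
  apply: ZN_proot => // [|g Gg|]; first exact: groupX.
    exact: (commg_ZN nsM'G (groupX q Z2w) Gg).
  by rewrite -expgM mulnC expgM expZM ?expZM'.
case/negP: Z1w'; apply: mem_coprime_expg q_gt0 co_qr _ (expZM' w Z2w).
exact: subsetP (proper_sub ltZ01) _ Z0wq.
Qed.

Section Chain.

Variables (gT : finGroupType) (G : {group gT}) (K : nat -> {group gT}).
Hypotheses (nsKG : forall i, K i <| G) (sKK : forall i, K i \subset K i.+1).
Hypothesis collapseK : forall i, ZN_collapses G (K i) (K i.+1).

Lemma chain_layer_exp (a b : nat) :
  (forall i, (a <= i < b)%N ->
     ZN G (K i) \proper ZN G (K i.+1) /\ [~: K i.+1, G] \subset K i) ->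
  exists2 p, prime p & forall i, (a <= i < b)%N -> layer_exp G (K i) (K i.+1) p.
Proof.
move=> layerK.
have layer_prime i : (a <= i < b)%N -> exists2 p, prime p & layer_exp G (K i) (K i.+1) p.
  by case/layerK=> ltZ cKG; apply: exists_layer_exp.
have [lt_ab | le_ba] := ltnP a b; last first.
  exists 2 => // i /andP[le_ai lt_ib].
  by have := leq_ltn_trans le_ai lt_ib; rewrite ltnNge le_ba.
have [p p_pr layer_a] : exists2 p, prime p & layer_exp G (K a) (K a.+1) p.
  by apply: layer_prime; rewrite leqnn.
exists p => // i; elim: i => [|i IHi] /andP[le_ai lt_ib].
  by move: le_ai layer_a; rewrite leqn0 => /eqP->.
move: le_ai; rewrite leq_eqVlt ltnS => /predU1P[<- // | le_ai].
have ai1 : (a <= i.+1 < b)%N by rewrite ltnW.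
have ai : (a <= i < b)%N by rewrite le_ai ltnW.
have [r r_pr layer_r] := layer_prime i.+1 ai1.
have [[ltZ0 cK0] [ltZ1 cK1]] := (layerK i ai, layerK i.+1 ai1).
by rewrite (layer_exp_uniq (nsKG i) (nsKG i.+1) (nsKG i.+2) (sKK i) (sKK i.+1)
  cK0 cK1 (@collapseK i) ltZ0 ltZ1 p_pr (IHi ai) r_pr layer_r).
Qed.

End Chain.

Lemma ZN_cfker_sub_cfcenter (gT : finGroupType) (G : {group gT}) (i : Iirr G) :
  ZN G (cfker ('chi_i)%R) \subset 'Z(('chi_i)%R)%CF.
Proof.
apply/subsetP=> x /morphpreP[Nx]; rewrite /= -cfcenter_eq_center => Zx.
by rewrite -(quotientGK (cfker_center_normal ('chi_i)%R)); apply/morphpreP.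
Qed.

Lemma cfcenter_sub_ZN (gT : finGroupType) (G N : {group gT}) (i : Iirr G) :
  N <| G -> N \subset cfker ('chi_i)%R ->
  ~~ (coset N @*^-1 Kfun (G / N)%G \subset cfker ('chi_i)%R) ->
  'Z(('chi_i)%R)%CF \subset ZN G N.
Proof.
move=> nsNG sNK; rewrite /Kfun; case: ifP => [abQ _ | _ not_sKker].
  by rewrite /ZN /= (center_idP abQ) quotientGK ?cfcenter_sub.
have nsNK : N <| cfker ('chi_i)%R := normalS sNK (cfker_sub _) nsNG.
have eqZ : 'Z(G / N) = 'Z(('chi_(quo_Iirr N i))%R)%CF.
  apply/eqP; rewrite eqEproper -{1}cap_cfcenter_irr bigcap_inf //=.
  apply: contra not_sKker => ltZ; rewrite -(quotientGK nsNK) cosetpreSK.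
  by apply: subset_trans (bigcap_inf (quo_Iirr N i) ltZ) _; rewrite /= quo_IirrE // cfker_quo.
apply/subsetP=> x Zx; have Gx := subsetP (cfcenter_sub _) x Zx.
apply/morphpreP; split; first exact: subsetP (normal_norm nsNG) x Gx.
rewrite /= eqZ irr_cfcenterE ?mem_quotient // quo_IirrE // cfQuoE // cfQuo1.
by rewrite -irr_cfcenterE.
Qed.

Lemma Kfun_collapses (gT : finGroupType) (G N : {group gT}) :
  N <| G -> ZN_collapses G N (coset N @*^-1 Kfun (G / N)%G)%G.
Proof.
move=> nsNG L nsLG sNL not_sKL.
have [i /andP[sLker not_sKker]] : exists i : Iirr G,
    (L \subset cfker ('chi_i)%R) && ~~ (coset N @*^-1 Kfun (G / N)%G \subset cfker ('chi_i)%R).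
  apply/existsP; apply: contraR not_sKL => /existsPn no_i.
  rewrite -(cap_cfker_normal nsLG); apply/bigcapsP=> i sLker.
  by have := no_i i; rewrite sLker negbK.
apply: subset_trans (ZNS nsLG (cfker_normal _) sLker) _.
apply: subset_trans (ZN_cfker_sub_cfcenter i) _.
exact: cfcenter_sub_ZN (subset_trans sNL sLker) not_sKker.
Qed.

Lemma Kfun_normal (rT : finGroupType) (H : {group rT}) : Kfun H <| H.
Proof.
rewrite /Kfun; case: ifP => [_ | nabH]; first exact: normal_refl.
rewrite /normal norms_bigcap ?andbT; last first.
  by apply/bigcapsP=> i _; apply: normal_norm (cfker_normal _).
have ltZ : 'Z(H) \proper 'Z(('chi[H]_0)%R)%CF.
  apply: proper_sub_trans (normal_sub (cfker_center_normal _)).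
  rewrite cfker_irr0 properEneq center_sub andbT.
  by apply: contraFneq nabH => /center_idP.
by apply: subset_trans (bigcap_inf 0%R ltZ) _; rewrite /= cfker_irr0.
Qed.

Lemma Kser_normal (gT : finGroupType) (G : {group gT}) (i : nat) : Kser G i <| G.
Proof.
elim: i => [|i IHi] /=; first exact: normal1.
by rewrite -[X in _ <| X](quotientGK IHi) cosetpre_normal Kfun_normal.
Qed.

Lemma Kser_sub (gT : finGroupType) (G : {group gT}) (i : nat) : Kser G i \subset Kser G i.+1.
Proof. exact: sub_cosetpre. Qed.

Theorem theoremF (gT : finGroupType) (G : {group gT}) (j k : nat) :
  (1 <= j)%N -> (j < k)%N ->
  (forall i : nat, (j <= i <= k)%N ->
     ZN G (Kser G i.-1) \proper ZN G (Kser G i) /\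
     [~: Kser G i, G] \subset Kser G i.-1) ->
  exists p : nat,
    [/\ prime p,
        p.-group (Kser G k / Kser G j.-1),
        p.-group (ZN G (Kser G k) / ZN G (Kser G j.-1)),
        (forall i : nat, (j <= i <= k)%N -> p.-abelem (Kser G i / Kser G i.-1))
      & (forall i : nat, (j <= i <= k)%N ->
           p.-abelem (ZN G (Kser G i) / ZN G (Kser G i.-1)))].
Proof.
move=> j_gt0 lt_jk layerK.
have layerK' i : (j.-1 <= i < k)%N ->
    ZN G (Kser G i) \proper ZN G (Kser G i.+1) /\ [~: Kser G i.+1, G] \subset Kser G i.
  by case/andP=> le_ji lt_ik; apply: (layerK i.+1); rewrite lt_ik -(prednK j_gt0) ltnS le_ji.
have [p p_pr layer_p] := chain_layer_exp (Kser_normal G) (Kser_sub G)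
  (fun i => Kfun_collapses (Kser_normal G i)) layerK'.
have le_jk : (j.-1 <= k)%N := leq_trans (leq_pred j) (ltnW lt_jk).
have abelem_layer i : (j <= i <= k)%N ->
    p.-abelem (Kser G i / Kser G i.-1) /\ p.-abelem (ZN G (Kser G i) / ZN G (Kser G i.-1)).
  case: i => [|i] /andP[le_ji le_ik]; first by rewrite leqNgt j_gt0 in le_ji.
  have ji : (j.-1 <= i < k)%N by rewrite le_ik -ltnS (prednK j_gt0) le_ji.
  exact: (layer_abelem (Kser_normal G i) (Kser_normal G i.+1) (layerK' i ji).2
    p_pr (layer_p i ji)).
exists p; split=> // [||i /abelem_layer[] //|i /abelem_layer[] //].
  exact: pgroup_quotient_expg p_pr (expg_chain le_jk (fun i ji => (layer_p i ji).1)).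
exact: pgroup_quotient_expg p_pr
  (expg_chain (A := fun i => ZN G (Kser G i)) le_jk (fun i ji => (layer_p i ji).2)).
Qed.
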